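(* Let $A$, $B$, $C$, and $D$ be finite posets, with $A$ connected and non-empty. Assume that $A\times B\cong C\times D$. Then there exist posets $W$, $X$, $Y$, and $Z$ such that $A\cong W\times X$, $B\cong Y\times Z$, $C\cong W\times Y$, and $D\cong X\times Z$.
   Context: Products of posets are ordered componentwise; posets may be empty. *)

From HB Require Import structures.
From mathcomp Require Import all_boot all_order.
Set Implicit Arguments. Unset Strict Implicit. Unset Printing Implicit Defensive.
Import Order.Theory.
Local Open Scope order_scope.

Definition order_iso (d1 d2 : Order.disp_t) (T1 : porderType d1) (T2 : porderType d2) : Prop :=
  exists f : T1 -> T2, bijective f /\ forall x y : T1, (f x <= f y) = (x <= y).

Definition poset_connected (d : Order.disp_t) (T : finPOrderType d) : Prop :=
  forall x y : T, connect (fun a b : T => (a <= b) || (b <= a)) x y.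

From HB Require Import structures.
From mathcomp Require Import all_boot all_order.
Set Implicit Arguments. Unset Strict Implicit. Unset Printing Implicit Defensive.
Import Order.Theory.
Local Open Scope order_scope.

(* Write the isomorphism A x B ~ C x D as (a, b) |-> (g(a, b), h(a, b)).  For comparable
   b, b', whether g(a, b) = g(a, b') does not depend on a, because A is connected; the same
   holds for h.  Hence, for each b, a |-> (g(a, b), h(a, b)) identifies A with the product
   of the fibers of h(-, b) and g(-, b) through a fixed point a0.  If both fibers are proper
   for some b, A splits into two smaller connected factors and we conclude by induction on
   |A|.  Otherwise, for every b one of g(-, b), h(-, b) is constant.  If every c in C is
   some g(a, b) with h(-, b) constant, then C ~ A x Y for a subposet Y of B, and cancelling
   the nonempty factor A gives B ~ Y x D; cancellation is Lovasz's theorem that finite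
   posets receiving equally many homomorphisms from every finite relation are isomorphic.
   Otherwise every d in D is some h(a, b) with g(-, b) constant, and C, D swap roles. *)

Definition subposet d (T : finPOrderType d) (P : pred T) : Type := {x : T | P x}.
HB.instance Definition _ d T P := [isSub of @subposet d T P for @proj1_sig T (fun x => P x)].
HB.instance Definition _ d T P := [Finite of @subposet d T P by <:].
HB.instance Definition _ d T P := [SubChoice_isSubPOrder of @subposet d T P by <: with d].

Lemma card_lt_cardT (T : finType) (P : pred T) a : ~~ P a -> (#|P| < #|T|)%N.
Proof.
move=> Pa; apply: proper_card; apply/properP.
by split; [apply/subsetP | exists a].
Qed.

Section OrderIso.
Context {d1 d2 d3 d4 : Order.disp_t}.

Lemma order_iso_refl (A : porderType d1) : order_iso A A.
Proof. by exists id; split=> //; exists id. Qed.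

Lemma order_iso_sym (A : porderType d1) (B : porderType d2) :
  order_iso A B -> order_iso B A.
Proof.
case=> f [[g fK gK] le_f]; exists g; split; first by exists f.
by move=> x y; rewrite -le_f !gK.
Qed.

Lemma order_iso_trans (A : porderType d1) (B : porderType d2) (C : porderType d3) :
  order_iso A B -> order_iso B C -> order_iso A C.
Proof.
case=> f [bij_f le_f] [g [bij_g le_g]]; exists (g \o f); split; first exact: bij_comp.
by move=> x y /=; rewrite le_g le_f.
Qed.

Lemma order_iso_prod (A : porderType d1) (B : porderType d2)
    (A' : porderType d3) (B' : porderType d4) :
  order_iso A A' -> order_iso B B' -> order_iso (A *p B) (A' *p B').
Proof.
case=> f [[f' fK f'K] le_f] [g [[g' gK g'K] le_g]].
exists (fun x : A *p B => (f x.1, g x.2) : A' *p B'); split.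
  by exists (fun y : A' *p B' => (f' y.1, g' y.2) : A *p B) => -[x1 x2] /=;
    rewrite ?fK ?gK ?f'K ?g'K.
by move=> [x1 x2] [y1 y2]; rewrite !le_pair le_f le_g.
Qed.

Lemma order_iso_prodC (A : porderType d1) (B : porderType d2) :
  order_iso (A *p B) (B *p A).
Proof.
exists (fun x : A *p B => (x.2, x.1) : B *p A); split.
  by exists (fun y : B *p A => (y.2, y.1) : A *p B) => -[].
by move=> [x1 x2] [y1 y2]; rewrite !le_pair andbC.
Qed.

Lemma order_iso_prodA (A : porderType d1) (B : porderType d2) (C : porderType d3) :
  order_iso ((A *p B) *p C) (A *p (B *p C)).
Proof.
exists (fun x : (A *p B) *p C => (x.1.1, (x.1.2, x.2) : B *p C) : A *p (B *p C)); split.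
  exists (fun y : A *p (B *p C) => ((y.1, y.2.1) : A *p B, y.2.2) : (A *p B) *p C).
    by move=> [[]].
  by move=> [? []].
by move=> [[x1 x2] x3] [[y1 y2] y3]; rewrite !le_pair andbA.
Qed.

Lemma order_iso_prodACA (A : porderType d1) (B : porderType d2)
    (C : porderType d3) (D : porderType d4) :
  order_iso ((A *p B) *p (C *p D)) ((A *p C) *p (B *p D)).
Proof.
pose f (x : (A *p B) *p (C *p D)) := ((x.1.1, x.2.1) : A *p C, (x.1.2, x.2.2) : B *p D).
pose g (y : (A *p C) *p (B *p D)) := ((y.1.1, y.2.1) : A *p B, (y.1.2, y.2.2) : C *p D).
exists f; split; first by exists g => -[[? ?] [? ?]].
by move=> [[x1 x2] [x3 x4]] [[y1 y2] [y3 y4]]; rewrite /f /= !le_pair andbACA.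
Qed.

Lemma order_iso_prod1 (A : porderType d1) : order_iso A (A *p 'I_1).
Proof.
exists (fun x : A => (x, ord0) : A *p 'I_1); split.
  exists (fun y : A *p 'I_1 => y.1) => // -[x i] /=.
  by congr pair; apply/val_inj; case: i => -[].
by move=> x y; rewrite le_pair lexx andbT.
Qed.

End OrderIso.

Lemma order_iso_1prod d (A : porderType d) : order_iso A ('I_1 *p A).
Proof. exact: order_iso_trans (order_iso_prod1 A) (order_iso_prodC A _). Qed.

Lemma connect_ind (T : finType) (e : rel T) (P : T -> Prop) x y :
  P x -> (forall u v, e u v -> P u -> P v) -> connect e x y -> P y.
Proof.
move=> Px IH /connectP[s]; elim: s x Px => [|z s IHs] x Px /=; first by move=> _ ->.
by case/andP=> exz pz ly; apply: IHs (IH _ _ exz Px) pz ly.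
Qed.

Lemma connect_const (T : finType) (e : rel T) U (f : T -> U) x y :
  (forall u v, e u v -> f u = f v) -> connect e x y -> f x = f y.
Proof. by move=> f_e; apply: (connect_ind (P := fun z => f x = f z)) => // u v /f_e ->. Qed.

Lemma connect_comparable_homo d1 d2 (T1 : finPOrderType d1) (T2 : finPOrderType d2)
    (f : T1 -> T2) x y :
  {homo f : u v / u <= v} -> connect >=<%O x y -> connect >=<%O (f x) (f y).
Proof.
move=> f_homo; apply: (connect_ind (P := fun z => connect _ (f x) (f z))) => [|u v uv fxu].
  exact: connect0.
apply: connect_trans fxu (connect1 _).
by case/orP: uv => /f_homo le; rewrite /Order.comparable le ?orbT.
Qed.

Lemma poset_connected_factor d1 d2 d3 (A : finPOrderType d1)
    (W : finPOrderType d2) (X : finPOrderType d3) :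
  poset_connected A -> order_iso A (W *p X) -> (0 < #|X|)%N -> poset_connected W.
Proof.
move=> conA [e [[e' eK e'K] le_e]] /card_gt0P[x0 _] w1 w2.
have fst_homo : {homo (fun a => (e a).1) : u v / u <= v}.
  by move=> u v; rewrite -le_e leEprod => /andP[].
have := connect_comparable_homo fst_homo (conA (e' (w1, x0)) (e' (w2, x0))).
by rewrite !e'K.
Qed.

(** * Cancellation of a nonempty factor *)

Section Homs.
Variables (T : finType) (r : rel T).

Definition is_hom d (B : finPOrderType d) (phi : {ffun T -> B}) :=
  [forall x, forall y, r x y ==> (phi x <= phi y)].

Definition separates (F : {set T * T}) d (B : finPOrderType d) (phi : {ffun T -> B}) :=
  [forall e in F, phi e.1 != phi e.2].

Definition homs (F : {set T * T}) d (B : finPOrderType d) : {set {ffun T -> B}} :=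
  [set phi | is_hom phi & separates F phi].

Definition nhoms (F : {set T * T}) d (B : finPOrderType d) := #|homs F B|.

Variables (d : Order.disp_t) (B : finPOrderType d).
Implicit Types (F : {set T * T}) (phi : {ffun T -> B}).

Lemma is_homP phi : reflect (forall x y, r x y -> phi x <= phi y) (is_hom phi).
Proof.
apply: (iffP forallP) => [hom x y | hom x]; first exact/implyP/(forallP (hom x) y).
by apply/forallP => y; apply/implyP/hom.
Qed.

Lemma separatesP F phi : reflect (forall e, e \in F -> phi e.1 != phi e.2) (separates F phi).
Proof. exact: forall_inP. Qed.

Lemma separates0 phi : separates set0 phi.
Proof. by apply/separatesP => e; rewrite inE. Qed.

Lemma nhoms0_gt0 (x0 : B) : (0 < nhoms set0 B)%N.
Proof.
apply/card_gt0P; exists [ffun=> x0]; rewrite inE separates0 andbT.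
by apply/is_homP => x y _; rewrite !ffunE.
Qed.

Lemma nhoms_loop F e : e \in F -> e.1 = e.2 -> nhoms F B = 0%N.
Proof.
move=> eF e12; apply/eqP; rewrite cards_eq0; apply/eqP/setP => phi; rewrite !inE.
by apply/negbTE/andP => -[_ /separatesP/(_ e eF)]; rewrite e12 eqxx.
Qed.

Lemma nhoms_split F e :
  nhoms F B = (nhoms (e |: F) B + #|[set phi in homs F B | phi e.1 == phi e.2]|)%N.
Proof.
rewrite /nhoms -(cardsID [set phi : {ffun T -> B} | phi e.1 == phi e.2] (homs F B)) addnC.
congr (_ + _)%N; apply: eq_card => phi; rewrite !inE; last by rewrite andbC.
case: (is_hom phi); rewrite ?andbF //=.
apply/andP/separatesP => [[ne /separatesP sepF] e' | sep].
  by rewrite !inE => /orP[/eqP -> | /sepF].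
split; first by apply: sep; rewrite !inE eqxx.
by apply/separatesP => e' e'F; apply: sep; rewrite !inE e'F orbT.
Qed.

End Homs.

Lemma nhoms_le_iso (T : finType) (r : rel T) (F : {set T * T}) d1 d2
    (X : finPOrderType d1) (Y : finPOrderType d2) :
  order_iso X Y -> (nhoms r F X <= nhoms r F Y)%N.
Proof.
case=> e [[e' eK _] le_e].
pose f (phi : {ffun T -> X}) : {ffun T -> Y} := [ffun x => e (phi x)].
have f_inj : injective f.
  move=> phi psi /ffunP eq_f; apply/ffunP => x.
  by have := eq_f x; rewrite !ffunE => /(can_inj eK).
rewrite /nhoms -(card_imset _ f_inj).
apply/subset_leq_card/subsetP => _ /imsetP[phi + ->].
rewrite !inE => /andP[/is_homP hom_phi /separatesP sep_phi]; apply/andP; split.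
  by apply/is_homP => x y rxy; rewrite !ffunE le_e hom_phi.
by apply/separatesP => p pF; rewrite !ffunE (can_eq eK) sep_phi.
Qed.

Lemma nhoms_iso (T : finType) (r : rel T) (F : {set T * T}) d1 d2
    (X : finPOrderType d1) (Y : finPOrderType d2) :
  order_iso X Y -> nhoms r F X = nhoms r F Y.
Proof.
by move=> isoXY; apply/eqP; rewrite eqn_leq !nhoms_le_iso //; apply: order_iso_sym.
Qed.

Lemma nhoms0_prod (T : finType) (r : rel T) d1 d2
    (X : finPOrderType d1) (Y : finPOrderType d2) :
  nhoms r set0 (X *p Y) = (nhoms r set0 X * nhoms r set0 Y)%N.
Proof.
rewrite /nhoms -cardsX.
pose split (phi : {ffun T -> X *p Y}) := ([ffun x => (phi x).1], [ffun x => (phi x).2]).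
have split_inj : injective split.
  move=> phi psi [/ffunP eq1 /ffunP eq2]; apply/ffunP => x.
  by move: (eq1 x) (eq2 x); rewrite !ffunE; case: (phi x) (psi x) => [? ?] [? ?] /= -> ->.
rewrite -(card_imset _ split_inj); apply: eq_card => -[u v]; rewrite !inE !separates0 !andbT.
apply/imsetP/andP => [[phi] | [/is_homP hom_u /is_homP hom_v]].
  rewrite inE separates0 andbT => /is_homP hom_phi [-> ->].
  by split; apply/is_homP => x y /hom_phi; rewrite !ffunE leEprod => /andP[].
exists [ffun x => (u x, v x) : X *p Y]; last by congr pair; apply/ffunP => x; rewrite !ffunE.
rewrite inE separates0 andbT; apply/is_homP => x y rxy.
by rewrite !ffunE le_pair hom_u ?hom_v.
Qed.

Section Merge.
Variables (T : finType) (i j : T) (neq_ij : i != j).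

Definition merged := {x : T | x != j}.

Definition merge (x : T) : merged := odflt (exist _ i neq_ij) (insub x).

Lemma val_merge x : val (merge x) = if x == j then i else x.
Proof.
by rewrite /merge; case: insubP => [u /negbTE-> -> | /negPn/eqP->] //=; rewrite eqxx.
Qed.

Lemma val_mergeK : cancel val merge.
Proof. by move=> u; apply: val_inj; rewrite val_merge (negbTE (valP u)). Qed.

Lemma card_merged : (#|{: merged}| < #|T|)%N.
Proof. by rewrite card_sig; apply: (card_lt_cardT (a := j)); rewrite negbK. Qed.

Variables (r : rel T) (F : {set T * T}).

Definition merge_rel : rel merged :=
  fun u v => [exists x, exists y, [&& merge x == u, merge y == v & r x y]].

Definition merge_set : {set merged * merged} := [set (merge e.1, merge e.2) | e in F].

Lemma card_homs_merge d (B : finPOrderType d) :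
  #|[set phi in homs r F B | phi i == phi j]| = nhoms merge_rel merge_set B.
Proof.
pose lift (psi : {ffun merged -> B}) := [ffun x => psi (merge x)].
have lift_inj : injective lift.
  move=> psi psi' /ffunP eq_lift; apply/ffunP => u.
  by have := eq_lift (val u); rewrite !ffunE val_mergeK.
rewrite /nhoms -(card_imset _ lift_inj); apply: eq_card => phi; apply/idP/imsetP.
  rewrite !inE => /andP[/andP[/is_homP hom_phi /separatesP sep_phi] /eqP phi_ij].
  have phi_merge x : phi (val (merge x)) = phi x.
    by rewrite val_merge; case: eqP => // ->.
  exists [ffun u => phi (val u)]; last by apply/ffunP => x; rewrite !ffunE phi_merge.
  rewrite inE; apply/andP; split.
    apply/is_homP => u v /existsP[x /existsP[y /and3P[/eqP <- /eqP <- rxy]]].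
    by rewrite !ffunE !phi_merge hom_phi.
  by apply/separatesP => _ /imsetP[e eF ->]; rewrite !ffunE !phi_merge sep_phi.
case=> psi; rewrite !inE => /andP[/is_homP hom_psi /separatesP sep_psi] ->.
rewrite /lift !ffunE.
have -> : merge i = merge j by apply: val_inj; rewrite !val_merge eqxx (negbTE neq_ij).
rewrite eqxx andbT; apply/andP; split.
  apply/is_homP => x y rxy; rewrite !ffunE; apply: hom_psi.
  by apply/existsP; exists x; apply/existsP; exists y; rewrite !eqxx.
apply/separatesP => e eF; rewrite !ffunE.
by apply: (sep_psi (merge e.1, merge e.2)); apply/imsetP; exists e.
Qed.

End Merge.

(* Deletion-contraction on a pair e of F: a hom either separates e too, or identifies
   its two ends and then factors through the relation with e.2 glued onto e.1. *)
Lemma nhoms_eq d1 d2 (B1 : finPOrderType d1) (B2 : finPOrderType d2) :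
    (forall (T : finType) (r : rel T), nhoms r set0 B1 = nhoms r set0 B2) ->
  forall (T : finType) (r : rel T) (F : {set T * T}), nhoms r F B1 = nhoms r F B2.
Proof.
move=> eq0 T; have [n] := ubnP #|T|; elim: n T => // n IHn T /ltnSE leTn r F.
have [k] := ubnP #|F|; elim: k F => // k IHk F /ltnSE leFk.
have [-> | [e eF]] := set_0Vmem F; first exact: eq0.
have [eq_e | neq_e] := eqVneq e.1 e.2; first by rewrite !(nhoms_loop _ _ eF eq_e).
have ltFk : (#|F :\ e| < k)%N by move: leFk; rewrite (cardsD1 e F) eF.
have := nhoms_split r B1 (F :\ e) e; have := nhoms_split r B2 (F :\ e) e.
rewrite setD1K // !(card_homs_merge neq_e) IHk //.
rewrite (IHn _ (leq_trans (card_merged e.2) leTn)) => -> /eqP.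
by rewrite eqn_add2r => /eqP.
Qed.

Lemma exists_inj_homo d1 d2 (B1 : finPOrderType d1) (B2 : finPOrderType d2) :
    (forall (T : finType) (r : rel T), nhoms r set0 B1 = nhoms r set0 B2) ->
  exists2 phi : B1 -> B2, injective phi & {homo phi : x y / x <= y}.
Proof.
move=> eq0; pose F := [set e : B1 * B1 | e.1 != e.2].
have : (0 < nhoms <=%O F B1)%N.
  apply/card_gt0P; exists [ffun x => x]; rewrite inE; apply/andP; split.
    by apply/is_homP => x y; rewrite !ffunE.
  by apply/separatesP => e; rewrite inE !ffunE.
rewrite (nhoms_eq eq0) => /card_gt0P[phi].
rewrite inE => /andP[/is_homP hom_phi /separatesP sep_phi].
exists phi => // x y eq_phi; apply/eqP/negPn/negP => neq_xy.
by have := sep_phi (x, y); rewrite inE /= eq_phi eqxx => /(_ neq_xy).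
Qed.

Lemma order_iso_of_inj_homo d1 d2 (B1 : finPOrderType d1) (B2 : finPOrderType d2)
    (phi : B1 -> B2) (psi : B2 -> B1) :
  injective phi -> injective psi ->
  {homo phi : x y / x <= y} -> {homo psi : x y / x <= y} -> order_iso B1 B2.
Proof.
move=> phi_inj psi_inj phi_homo psi_homo.
exists phi; split; first by apply: inj_card_bij => //; apply: leq_card psi_inj.
pose le_pairs d (B : finPOrderType d) := [set u : B * B | u.1 <= u.2].
pose phi2 (u : B1 * B1) := (phi u.1, phi u.2).
pose psi2 (u : B2 * B2) := (psi u.1, psi u.2).
have phi2_inj : injective phi2 by move=> [? ?] [? ?] [/phi_inj -> /phi_inj ->].
have psi2_inj : injective psi2 by move=> [? ?] [? ?] [/psi_inj -> /psi_inj ->].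
have sub_phi2 : phi2 @: le_pairs _ B1 \subset le_pairs _ B2.
  by apply/subsetP => v /imsetP[u]; rewrite !inE => /phi_homo le ->.
have sub_psi2 : psi2 @: le_pairs _ B2 \subset le_pairs _ B1.
  by apply/subsetP => v /imsetP[u]; rewrite !inE => /psi_homo le ->.
have img_phi2 : phi2 @: le_pairs _ B1 = le_pairs _ B2.
  apply/eqP; rewrite eqEcard sub_phi2 card_imset //.
  by have := subset_leq_card sub_psi2; rewrite card_imset.
move=> x y; apply/idP/idP => [le_phi | /phi_homo //].
have : (phi x, phi y) \in le_pairs _ B2 by rewrite inE.
by rewrite -img_phi2 => /imsetP[[u v]]; rewrite inE => le_uv [/phi_inj -> /phi_inj ->].
Qed.

Lemma order_iso_prod_cancel d d1 d2 (A : finPOrderType d)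
    (B1 : finPOrderType d1) (B2 : finPOrderType d2) :
  (0 < #|A|)%N -> order_iso (A *p B1) (A *p B2) -> order_iso B1 B2.
Proof.
move=> /card_gt0P[a0 _] isoAB.
have eq0 (T : finType) (r : rel T) : nhoms r set0 B1 = nhoms r set0 B2.
  have := nhoms_iso r set0 isoAB; rewrite !nhoms0_prod => /eqP.
  by rewrite eqn_mul2l (negbTE (lt0n_neq0 (nhoms0_gt0 r a0))) => /eqP.
have [phi phi_inj phi_homo] := exists_inj_homo eq0.
have [psi psi_inj psi_homo] := exists_inj_homo (fun T r => esym (eq0 T r)).
exact: order_iso_of_inj_homo phi_inj psi_inj phi_homo psi_homo.
Qed.

(** * Products with a connected factor *)

(* An isomorphism A x B ~ C x D in coordinates; this form makes it easy to exchange the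
   roles of the two factors on either side. *)
Record prod_iso dA dB dC dD (A : porderType dA) (B : porderType dB)
    (C : porderType dC) (D : porderType dD) := ProdIso {
  toC : A -> B -> C;
  toD : A -> B -> D;
  toA : C -> D -> A;
  toB : C -> D -> B;
  toCK : forall c d, toC (toA c d) (toB c d) = c;
  toDK : forall c d, toD (toA c d) (toB c d) = d;
  toAK : forall a b, toA (toC a b) (toD a b) = a;
  toBK : forall a b, toB (toC a b) (toD a b) = b;
  le_toCD : forall a b a' b',
    (toC a b <= toC a' b') && (toD a b <= toD a' b') = (a <= a') && (b <= b')
}.

Section ProdIsoConstructions.
Variables (dA dB dC dD : Order.disp_t) (A : porderType dA) (B : porderType dB).
Variables (C : porderType dC) (D : porderType dD).

Lemma prod_iso_of_order_iso :
  order_iso (A *p B) (C *p D) -> inhabited (prod_iso A B C D).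
Proof.
case=> f [[f' fK f'K] le_f]; constructor.
pose toC a b := (f (a, b)).1; pose toD a b := (f (a, b)).2.
pose toA c d := (f' (c, d)).1; pose toB c d := (f' (c, d)).2.
apply: (@ProdIso _ _ _ _ A B C D toC toD toA toB) => [c d | c d | a b | a b | a b a' b'].
- by rewrite /toC -surjective_pairing f'K.
- by rewrite /toD -surjective_pairing f'K.
- by rewrite /toA -surjective_pairing fK.
- by rewrite /toB -surjective_pairing fK.
- by rewrite -!leEprod le_f.
Qed.

Variable I : prod_iso A B C D.

Definition prod_iso_swapr : prod_iso A B D C.
Proof.
apply: (@ProdIso _ _ _ _ A B D C (toD I) (toC I) (fun d c => toA I c d) (fun d c => toB I c d)).
- by move=> d c; rewrite toDK.
- by move=> d c; rewrite toCK.
- by move=> a b; rewrite toAK.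
- by move=> a b; rewrite toBK.
- by move=> a b a' b'; rewrite andbC le_toCD.
Defined.

Definition prod_iso_swapl : prod_iso B A C D.
Proof.
apply: (@ProdIso _ _ _ _ B A C D (fun b a => toC I a b) (fun b a => toD I a b) (toB I) (toA I)).
- by move=> c d; rewrite toCK.
- by move=> c d; rewrite toDK.
- by move=> b a; rewrite toBK.
- by move=> b a; rewrite toAK.
- by move=> b a b' a'; rewrite le_toCD andbC.
Defined.

End ProdIsoConstructions.

Section ProdIsoTheory.
Variables (dA dB dC dD : Order.disp_t) (A : porderType dA) (B : porderType dB).
Variables (C : porderType dC) (D : porderType dD) (I : prod_iso A B C D).
Local Notation toC := (toC I).
Local Notation toD := (toD I).
Local Notation toA := (toA I).
Local Notation toB := (toB I).

Lemma toC_homo a a' b b' : a <= a' -> b <= b' -> toC a b <= toC a' b'.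
Proof. by move=> le_a le_b; have := le_toCD I a b a' b'; rewrite le_a le_b => /andP[]. Qed.

Lemma toD_homo a a' b b' : a <= a' -> b <= b' -> toD a b <= toD a' b'.
Proof. by move=> le_a le_b; have := le_toCD I a b a' b'; rewrite le_a le_b => /andP[]. Qed.

Lemma le_toAB c c' d d' :
  (toA c d <= toA c' d') && (toB c d <= toB c' d') = (c <= c') && (d <= d').
Proof. by rewrite -(le_toCD I) !toCK !toDK. Qed.

Lemma toA_homo c c' d d' : c <= c' -> d <= d' -> toA c d <= toA c' d'.
Proof. by move=> le_c le_d; have := le_toAB c c' d d'; rewrite le_c le_d => /andP[]. Qed.

Lemma toB_homo c c' d d' : c <= c' -> d <= d' -> toB c d <= toB c' d'.
Proof. by move=> le_c le_d; have := le_toAB c c' d d'; rewrite le_c le_d => /andP[]. Qed.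

Lemma toC_eq_ge a a' b b' :
  a <= a' -> b <= b' -> toC a b = toC a b' -> toC a' b = toC a' b'.
Proof.
move=> le_a le_b eq_ab.
(* The preimage of (toC a' b, toD a' b') lies above both (a', b) and (a, b'). *)
set c := toC a' b; set d := toD a' b'.
have /andP[le_a'm _] : (a' <= toA c d) && (b <= toB c d).
  by rewrite -(le_toCD I) toCK toDK lexx toD_homo.
have /andP[_ le_b'm] : (a <= toA c d) && (b' <= toB c d).
  by rewrite -(le_toCD I) toCK toDK -eq_ab !toC_homo ?toD_homo.
apply/le_anti; rewrite toC_homo //=.
by rewrite -[X in _ <= X](toCK I c d) toC_homo.
Qed.

Lemma toC_eq_le a a' b b' :
  a <= a' -> b <= b' -> toC a' b = toC a' b' -> toC a b = toC a b'.
Proof.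
move=> le_a le_b eq_a'b.
set c := toC a b'; set d := toD a b.
have /andP[le_ma _] : (toA c d <= a) && (toB c d <= b').
  by rewrite -(le_toCD I) toCK toDK lexx toD_homo.
have /andP[_ le_mb] : (toA c d <= a') && (toB c d <= b).
  by rewrite -(le_toCD I) toCK toDK eq_a'b !toC_homo ?toD_homo.
apply/le_anti; rewrite toC_homo //=.
by rewrite -[X in X <= _](toCK I c d) toC_homo.
Qed.

Lemma toC_eq_cmp a a' b b' : a >=< a' -> b >=< b' ->
  (toC a b == toC a b') = (toC a' b == toC a' b').
Proof.
move=> cmp_a cmp_b; wlog le_b : b b' {cmp_b} / b <= b'.
  move=> wlog_le; case/orP: cmp_b => le; first exact: wlog_le.
  by rewrite eq_sym [toC a' b == _]eq_sym wlog_le.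
case/orP: cmp_a => le_a; apply/eqP/eqP.
- exact: toC_eq_ge.
- exact: toC_eq_le.
- exact: toC_eq_le.
- exact: toC_eq_ge.
Qed.

End ProdIsoTheory.

Section ConnectedFactor.
Variables (dA dB dC dD : Order.disp_t) (A : finPOrderType dA) (B : finPOrderType dB).
Variables (C : finPOrderType dC) (D : finPOrderType dD) (I : prod_iso A B C D).
Hypothesis conA : poset_connected A.

Lemma toC_eq_connect a a' b b' :
  b >=< b' -> toC I a b = toC I a b' -> toC I a' b = toC I a' b'.
Proof.
move=> cmp_b eq_ab; apply/eqP.
have <- : (toC I a b == toC I a b') = (toC I a' b == toC I a' b').
  apply: (connect_const (f := fun x => toC I x b == toC I x b') _ (conA a a')) => u v cmp_uv.
  exact: toC_eq_cmp.
by rewrite eq_ab.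
Qed.

Lemma connect_toC a a' b : connect >=<%O (toC I a b) (toC I a' b).
Proof.
by apply: (connect_comparable_homo (f := toC I ^~ b)) (conA a a') => u v le; apply: toC_homo.
Qed.

End ConnectedFactor.

Section ConnectedFactorTransfer.
Variables (dA dB dC dD : Order.disp_t) (A : finPOrderType dA) (B : finPOrderType dB).
Variables (C : finPOrderType dC) (D : finPOrderType dD) (I : prod_iso A B C D).
Hypothesis conA : poset_connected A.

Lemma toD_toB_le c c' d a : c <= c' -> toD I a (toB I c d) = toD I a (toB I c' d).
Proof.
move=> le_c; have le_b : toB I c d <= toB I c' d by apply: toB_homo.
(* h(toA c' d, -) takes the value d both at toB c d and at toB c' d. *)
apply: (toC_eq_connect (I := prod_iso_swapr I) conA (a := toA I c' d)) => /=.
  by rewrite /Order.comparable le_b.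
apply/le_anti; rewrite toD_homo //= toDK.
by rewrite -[X in X <= _](toDK I c d) toD_homo // toA_homo.
Qed.

Lemma toD_toB_connect c c' d a :
  connect >=<%O c c' -> toD I a (toB I c d) = toD I a (toB I c' d).
Proof.
apply: (connect_const (f := fun x => toD I a (toB I x d))) => u v /orP[] le.
  exact: toD_toB_le.
exact/esym/toD_toB_le.
Qed.

End ConnectedFactorTransfer.

Section ConnectedFactorFibers.
Variables (dA dB dC dD : Order.disp_t) (A : finPOrderType dA) (B : finPOrderType dB).
Variables (C : finPOrderType dC) (D : finPOrderType dD) (I : prod_iso A B C D).
Hypothesis conA : poset_connected A.

Lemma toB_toC_toD a1 a2 b : toB I (toC I a1 b) (toD I a2 b) = b.
Proof.
have eqD : toD I a1 (toB I (toC I a1 b) (toD I a2 b)) = toD I a1 b.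
  by rewrite (toD_toB_connect I conA _ _ (connect_toC I conA a1 a2 b)) toBK.
have eqC : toC I a1 (toB I (toC I a1 b) (toD I a2 b)) = toC I a1 b.
  pose J := prod_iso_swapr I.
  have := toD_toB_connect J conA (toC I a1 b) a1 (connect_toC J conA a2 a1 b).
  by rewrite /= toBK.
by rewrite -[LHS](toBK I a1) eqC eqD toBK.
Qed.

Lemma order_iso_fibers a0 b :
  order_iso A (subposet [pred a | toD I a b == toD I a0 b] *p
               subposet [pred a | toC I a b == toC I a0 b]).
Proof.
pose mix a1 a2 := toA I (toC I a1 b) (toD I a2 b).
have toC_mix a1 a2 : toC I (mix a1 a2) b = toC I a1 b.
  by have := toCK I (toC I a1 b) (toD I a2 b); rewrite toB_toC_toD.
have toD_mix a1 a2 : toD I (mix a1 a2) b = toD I a2 b.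
  by have := toDK I (toC I a1 b) (toD I a2 b); rewrite toB_toC_toD.
have le_mix a1 a2 a1' a2' :
    (mix a1 a2 <= mix a1' a2') = (toC I a1 b <= toC I a1' b) && (toD I a2 b <= toD I a2' b).
  by rewrite -[LHS]andbT -(lexx b) -(le_toCD I) !toC_mix !toD_mix.
have W_mix a : toD I (mix a a0) b == toD I a0 b by rewrite toD_mix.
have X_mix a : toC I (mix a0 a) b == toC I a0 b by rewrite toC_mix.
exists (fun a => (exist _ (mix a a0) (W_mix a), exist _ (mix a0 a) (X_mix a))); split.
  exists (fun u => mix (val u.1) (val u.2)) => [a | [[w Ww] [x Xx]]] /=.
    by rewrite /mix toC_mix toD_mix toAK.
  congr pair; apply: val_inj => /=; rewrite {1}/mix ?toC_mix ?toD_mix.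
    by rewrite -(eqP Ww) toAK.
  by rewrite -(eqP Xx) toAK.
move=> a a'; rewrite le_pair !leEsub /= !le_mix !lexx andbT /=.
by rewrite le_toCD lexx andbT.
Qed.

Variable a0 : A.

Definition const_toD b := [forall a, toD I a b == toD I a0 b].

Lemma const_toD_cmp b b' : b >=< b' -> const_toD b = const_toD b'.
Proof.
suff imp b1 b2 : b1 >=< b2 -> const_toD b1 -> const_toD b2.
  by move=> cmp_b; apply/idP/idP; apply: imp; rewrite // comparable_sym.
move=> cmp_b /forallP const_b1; apply/forallP => a; apply/eqP.
apply: (connect_const (f := fun x => toD I x b2) _ (conA a a0)) => u v cmp_uv; apply/eqP.
rewrite -(toC_eq_cmp (prod_iso_swapl (prod_iso_swapr I)) cmp_b cmp_uv) /=.
by rewrite (eqP (const_b1 u)) (eqP (const_b1 v)).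
Qed.

Lemma const_toD_connect c c' d :
  connect >=<%O c c' -> const_toD (toB I c d) = const_toD (toB I c' d).
Proof.
apply: (connect_const (f := fun x => const_toD (toB I x d))) => u v /orP[] le.
  by apply/const_toD_cmp/orP; left; apply: toB_homo.
by apply/const_toD_cmp/orP; right; apply: toB_homo.
Qed.

End ConnectedFactorFibers.

Section ConnectedFactorConstant.
Variables (dA dB dC dD : Order.disp_t) (A : finPOrderType dA) (B : finPOrderType dB).
Variables (C : finPOrderType dC) (D : finPOrderType dD) (I : prod_iso A B C D).
Hypothesis conA : poset_connected A.
Variable a0 : A.
Hypothesis const_toD_somewhere : forall c, exists d, const_toD I a0 (toB I c d).

(* Chosen through [root], so that it is constant on comparability components of C. *)
Let rho (c : C) : D := xchoose (const_toD_somewhere (root >=<%O c)).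

Let rho_connect c c' : connect >=<%O c c' -> rho c = rho c'.
Proof.
move=> cc'; rewrite /rho; apply: eq_xchoose => d.
have sym_cmp : connect_sym (>=<%O : rel C).
  by apply: sym_connect_sym => x y; apply: comparable_sym.
by rewrite (rootP sym_cmp cc').
Qed.

Let const_toD_rho c : const_toD I a0 (toB I c (rho c)).
Proof.
rewrite (const_toD_connect I conA _ _ (connect_root _ c)).
exact: (xchooseP (const_toD_somewhere (root >=<%O c))).
Qed.

Lemma order_iso_const_factor : exists dY (Y : finPOrderType dY), order_iso (A *p Y) C.
Proof.
pose Y := [pred b | [forall a, toD I a b == rho (toC I a b)]].
have toD_Y (y : subposet Y) a : toD I a (val y) = rho (toC I a (val y)).
  exact/eqP/(forallP (valP y)).
have Y_toB c : Y (toB I c (rho c)).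
  have /forallP const_c := const_toD_rho c; apply/forallP => a.
  rewrite (eqP (const_c a)) -(eqP (const_c (toA I c (rho c)))) toDK.
  by rewrite -(rho_connect (connect_toC I conA (toA I c (rho c)) a _)) toCK.
exists _, (subposet Y), (fun u => toC I u.1 (val u.2)); split.
  exists (fun c => (toA I c (rho c), exist _ (toB I c (rho c)) (Y_toB c))) => [[a y] | c] /=.
    by congr pair; last apply: val_inj; rewrite /= -toD_Y ?toAK ?toBK.
  exact: toCK.
move=> [a y] [a' y']; rewrite le_pair leEsub /= -(le_toCD I) andb_idr // => le_C.
rewrite !toD_Y (rho_connect (c' := toC I a' (val y'))) //.
by apply: connect1; rewrite /Order.comparable le_C.
Qed.

End ConnectedFactorConstant.

(** * Common refinements *)

Definition common_refinement dA dB dC dD (A : finPOrderType dA) (B : finPOrderType dB)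
    (C : finPOrderType dC) (D : finPOrderType dD) : Prop :=
  exists (dW dX dY dZ : Order.disp_t)
         (W : finPOrderType dW) (X : finPOrderType dX)
         (Y : finPOrderType dY) (Z : finPOrderType dZ),
    [/\ order_iso A (W *p X), order_iso B (Y *p Z),
        order_iso C (W *p Y) & order_iso D (X *p Z)].

Definition has_refinements d (A : finPOrderType d) : Prop :=
  forall dB dC dD (B : finPOrderType dB) (C : finPOrderType dC) (D : finPOrderType dD),
    order_iso (A *p B) (C *p D) -> common_refinement A B C D.

Section Refinements.
Variables (dA dB dC dD : Order.disp_t) (A : finPOrderType dA) (B : finPOrderType dB).
Variables (C : finPOrderType dC) (D : finPOrderType dD).

Lemma common_refinement_swap : common_refinement A B D C -> common_refinement A B C D.
Proof.
case=> dW [dX [dY [dZ [W [X [Y [Z [isoA isoB isoD isoC]]]]]]]].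
exists dX, dW, dZ, dY, X, W, Z, Y; split=> //.
  exact: order_iso_trans isoA (order_iso_prodC _ _).
exact: order_iso_trans isoB (order_iso_prodC _ _).
Qed.

Lemma common_refinement_of_factor dY (Y : finPOrderType dY) :
  (0 < #|A|)%N -> order_iso (A *p Y) C -> order_iso (A *p B) (C *p D) ->
  common_refinement A B C D.
Proof.
move=> A0 isoAY isoABCD; exists _, _, _, _, A, 'I_1, Y, D; split.
- exact: order_iso_prod1.
- apply: (order_iso_prod_cancel A0); apply: order_iso_trans isoABCD _.
  apply: order_iso_trans (order_iso_prodA _ _ _).
  exact: order_iso_prod (order_iso_sym isoAY) (order_iso_refl D).
- exact: order_iso_sym.
- exact: order_iso_1prod.
Qed.

End Refinements.

Lemma common_refinement_of_fiber_dichotomy dA dB dC dD (A : finPOrderType dA)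
    (B : finPOrderType dB) (C : finPOrderType dC) (D : finPOrderType dD)
    (I : prod_iso A B C D) a0 :
  poset_connected A ->
  (forall b, const_toD I a0 b || const_toD (prod_iso_swapr I) a0 b) ->
  order_iso (A *p B) (C *p D) -> common_refinement A B C D.
Proof.
move=> conA dichotomy isoABCD; have A0 : (0 < #|A|)%N by apply/card_gt0P; exists a0.
have [constD | /forallPn[c /existsPn not_constD]] :=
  boolP [forall c, [exists d, const_toD I a0 (toB I c d)]].
  have [dY [Y isoAY]] := order_iso_const_factor conA (fun c => existsP (forallP constD c)).
  exact: common_refinement_of_factor A0 isoAY isoABCD.
have constC d : exists c', const_toD (prod_iso_swapr I) a0 (toB (prod_iso_swapr I) d c').
  by exists c; have := dichotomy (toB I c d); rewrite (negbTE (not_constD d)).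
have [dZ [Z isoAZ]] := order_iso_const_factor conA constC.
apply: common_refinement_swap; apply: common_refinement_of_factor A0 isoAZ _.
exact: order_iso_trans isoABCD (order_iso_prodC _ _).
Qed.

Lemma has_refinements_iso d d' (A : finPOrderType d) (A' : finPOrderType d') :
  order_iso A A' -> has_refinements A' -> has_refinements A.
Proof.
move=> isoA refA' dB dC dD B C D isoABCD.
have isoA'B : order_iso (A' *p B) (C *p D).
  exact: order_iso_trans (order_iso_prod (order_iso_sym isoA) (order_iso_refl B)) isoABCD.
have [dW [dX [dY [dZ [W [X [Y [Z [isoA' isoB isoC isoD]]]]]]]]] := refA' _ _ _ B C D isoA'B.
by exists dW, dX, dY, dZ, W, X, Y, Z; split=> //; apply: order_iso_trans isoA isoA'.
Qed.

Lemma has_refinements_prod dW dX (W : finPOrderType dW) (X : finPOrderType dX) :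
  has_refinements W -> has_refinements X -> has_refinements (W *p X).
Proof.
move=> refW refX dB dC dD B C D isoWXB.
have isoW_XB : order_iso (W *p (X *p B)) (C *p D).
  exact: order_iso_trans (order_iso_sym (order_iso_prodA _ _ _)) isoWXB.
have [dW1 [dX1 [dY1 [dZ1 [W1 [X1 [Y1 [Z1 [isoW isoXB isoC isoD]]]]]]]]] := refW _ _ _ _ _ _ isoW_XB.
have [dW2 [dX2 [dY2 [dZ2 [W2 [X2 [Y2 [Z2 [isoX isoB isoY1 isoZ1]]]]]]]]] := refX _ _ _ _ _ _ isoXB.
exists _, _, _, _, (W1 *p W2), (X1 *p X2), Y2, Z2; split=> //.
- exact: order_iso_trans (order_iso_prod isoW isoX) (order_iso_prodACA _ _ _ _).
- apply: order_iso_trans isoC (order_iso_trans (order_iso_prod (order_iso_refl W1) isoY1) _).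
  exact: order_iso_sym (order_iso_prodA _ _ _).
- apply: order_iso_trans isoD (order_iso_trans (order_iso_prod (order_iso_refl X1) isoZ1) _).
  exact: order_iso_sym (order_iso_prodA _ _ _).
Qed.

Lemma has_refinements_connected d (A : finPOrderType d) :
  poset_connected A -> (0 < #|A|)%N -> has_refinements A.
Proof.
have [n] := ubnP #|A|; elim: n d A => // n IHn d A /ltnSE leAn conA /card_gt0P[a0 _].
move=> dB dC dD B C D isoABCD; have [I] := prod_iso_of_order_iso isoABCD.
have [dichotomy | /forallPn[b]] :=
  boolP [forall b, const_toD I a0 b || const_toD (prod_iso_swapr I) a0 b].
  exact: common_refinement_of_fiber_dichotomy conA (forallP dichotomy) isoABCD.
rewrite negb_or => /andP[/forallPn[a1 not_Da1] /forallPn[a2 not_Ca2]].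
have isoA := order_iso_fibers I conA a0 b.
have W0 : (0 < #|{: subposet [pred a | toD I a b == toD I a0 b]}|)%N.
  by apply/card_gt0P; exists (exist _ a0 (eqxx _)).
have X0 : (0 < #|{: subposet [pred a | toC I a b == toC I a0 b]}|)%N.
  by apply/card_gt0P; exists (exist _ a0 (eqxx _)).
apply: (has_refinements_iso isoA) isoABCD; apply: has_refinements_prod; apply: IHn => //.
- by apply: leq_trans leAn; rewrite card_sig; apply: (card_lt_cardT (a := a1)).
- exact: poset_connected_factor conA isoA X0.
- by apply: leq_trans leAn; rewrite card_sig; apply: (card_lt_cardT (a := a2)).
- exact: poset_connected_factor conA (order_iso_trans isoA (order_iso_prodC _ _)) W0.
Qed.

Theorem theorem5
  (dA dB dC dD : Order.disp_t)
  (A : finPOrderType dA) (B : finPOrderType dB)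
  (C : finPOrderType dC) (D : finPOrderType dD) :
  poset_connected A -> (0 < #|A|)%N ->
  order_iso (A *p B) (C *p D) ->
  exists (dW dX dY dZ : Order.disp_t)
         (W : finPOrderType dW) (X : finPOrderType dX)
         (Y : finPOrderType dY) (Z : finPOrderType dZ),
    [/\ order_iso A (W *p X), order_iso B (Y *p Z),
        order_iso C (W *p Y) & order_iso D (X *p Z)].
Proof.
move=> conA A0 isoABCD.
exact: has_refinements_connected conA A0 _ _ _ _ _ _ isoABCD.
Qed.
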